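(* Let $X$ be a fibrewise locally equiconnected space over $B$ and $e:X\to X$ a fibrewise map with $e\circ e=e$. Then $(X,e(X))$ is a closed fibrewise cofibred pair.
   Context: A fibrewise space over $B$ is a space $X$ with $p_X:X\to B$; fibrewise maps satisfy $p_Y\circ f=p_X$. A fibrewise cofibration is a fibrewise map with the homotopy extension property with respect to fibrewise maps and fibrewise homotopies (homotopies $H$ with $p(H(x,t))=p(x)$); closed if also a closed embedding. $(X,A)$ is a closed fibrewise cofibred pair if $A\hookrightarrow X$ is a closed fibrewise cofibration. $X$ is fibrewise locally equiconnected if the diagonal $X\to X\times_BX=\{(x,y):p_X(x)=p_X(y)\}$ is a closed fibrewise cofibration. *)

From HB Require Import structures.
From mathcomp Require Import all_boot all_order all_algebra.
From mathcomp Require Import all_classical all_reals all_analysis.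
From mathcomp Require Import Rstruct Rstruct_topology.
From Stdlib Require Import Rdefinitions.

Set Implicit Arguments.
Unset Strict Implicit.
Unset Printing Implicit Defensive.

Local Open Scope classical_set_scope.
Local Open Scope ring_scope.

(* The unit interval I = [0,1] of the real line, with the subspace topology
   (set_type carries the initial topology of the inclusion). *)
Definition unitI : Type := set_type (`[0%R, 1%R]%classic : set Rdefinitions.R).

Definition fibrewise_map (B X Y : topologicalType) (pX : X -> B) (pY : Y -> B)
  (f : X -> Y) : Prop :=
  continuous f /\ forall x, pY (f x) = pX x.

Definition fibrewise_homotopy (B X E : topologicalType) (pX : X -> B) (pE : E -> B)
  (H : X * unitI -> E) : Prop :=
  continuous H /\ forall x t, pE (H (x, t)) = pX x.

Definition fibrewise_cofibration (B A X : topologicalType) (pA : A -> B) (pX : X -> B)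
  (i : A -> X) : Prop :=
  fibrewise_map pA pX i /\
  forall (E : topologicalType) (pE : E -> B), continuous pE ->
  forall (f : X -> E) (h : A * unitI -> E),
    fibrewise_map pX pE f -> fibrewise_homotopy pA pE h ->
    (forall a t, set_val t = 0%R -> h (a, t) = f (i a)) ->
    exists H : X * unitI -> E,
      [/\ fibrewise_homotopy pX pE H,
          (forall x t, set_val t = 0%R -> H (x, t) = f x) &
          (forall a t, H (i a, t) = h (a, t))].

Definition closed_embedding (A X : topologicalType) (i : A -> X) : Prop :=
  [/\ injective i,
      (forall U : set A, open U <-> exists V : set X, open V /\ i @^-1` V = U) &
      closed (range i)].

Definition closed_fibrewise_cofibration (B A X : topologicalType) (pA : A -> B)
  (pX : X -> B) (i : A -> X) : Prop :=
  fibrewise_cofibration pA pX i /\ closed_embedding i.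

Definition closed_fibrewise_cofibred_pair (B X : topologicalType) (pX : X -> B)
  (A : set X) : Prop :=
  closed_fibrewise_cofibration (pX \o (@set_val X A)) pX (@set_val X A).

Definition fibprod_set (B X : topologicalType) (pX : X -> B) : set (X * X) :=
  [set z | pX z.1 = pX z.2].

Definition fibprod (B X : topologicalType) (pX : X -> B) : Type :=
  set_type (fibprod_set pX).

Definition fibprod_proj (B X : topologicalType) (pX : X -> B) :
  fibprod pX -> B := fun z => pX (set_val z).1.

Definition diagonal (B X : topologicalType) (pX : X -> B) : X -> fibprod pX :=
  fun x => @exist (X * X) (fun z => z \in fibprod_set pX) (x, x)
             (@mem_set _ (fibprod_set pX) (x, x) (erefl (pX x))).

Definition fibrewise_LEC (B X : topologicalType) (pX : X -> B) : Prop :=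
  closed_fibrewise_cofibration pX (@fibprod_proj B X pX) (@diagonal B X pX).

Set Warnings "-notation-overridden,-ambiguous-paths,-notation-incompatible-prefix,-deprecated".
From Pilot Require Import Defs.
From HB Require Import structures.
From mathcomp Require Import all_boot all_order all_algebra.
From mathcomp Require Import all_classical all_reals all_analysis.
From mathcomp Require Import Rstruct Rstruct_topology.
From Stdlib Require Import Rdefinitions.
From mathcomp Require Import lra.
Import Order.TTheory GRing.Theory Num.Theory.

Set Implicit Arguments.
Unset Strict Implicit.
Unset Printing Implicit Defensive.

Local Open Scope classical_set_scope.
Local Open Scope ring_scope.

(* Write A = e(X); it is the fixed-point set of e and e retracts X onto A.
   - A is closed, being the preimage of the closed diagonal of X x_B X under
     the graph x |-> (x, e x); hence A -> X is a closed embedding.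
   - Extending homotopies into the space M = {(x, y, s) | p x = p y, s = 0 or
     x = y} along the diagonal cofibration and restricting along the graph
     of e yields a connecting homotopy: paths u(x,-) from x and v(x,-) from
     e x that agree wherever a real label a(x,-) is nonzero, with
     u = v = y and a(y,t) = t at fixed points y.
   - Running forward along u and back along v, reparametrised by the label,
     gives a fibrewise deformation K of the identity, stationary on A, and a
     control function sigma with sigma(x,0) = 0, sigma(y,t) = t on A and
     K(x,t) in A whenever sigma(x,t) > 0.
   - A fibrewise Strom-type criterion turns such (K, sigma) for a closed
     retract into the fibrewise homotopy extension property. *)

Lemma continuous_set_val (T : topologicalType) (A : set T) :
  continuous (@set_val T A).
Proof. exact: initial_continuous. Qed.

Lemma continuous_into_subspace (Z T : topologicalType) (A : set T) (g : Z -> A) :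
  continuous (fun z => set_val (g z)) -> continuous g.
Proof. exact: continuous_comp_initial. Qed.

Lemma continuous_compose (T U V : topologicalType) (f : T -> U) (g : U -> V) :
  continuous f -> continuous g -> continuous (fun x => g (f x)).
Proof. by move=> cf cg x; apply: continuous_comp; [exact: cf | exact: cg]. Qed.

Lemma continuous_pair (Z T U : topologicalType) (f : Z -> T) (g : Z -> U) :
  continuous f -> continuous g -> continuous (fun z => (f z, g z)).
Proof. by move=> cf cg z; apply: cvg_pair; [exact: cf | exact: cg]. Qed.

Lemma continuous_fst (T U : topologicalType) : continuous (@fst T U).
Proof. move=> z; exact: cvg_fst. Qed.

Lemma continuous_snd (T U : topologicalType) : continuous (@snd T U).
Proof. move=> z; exact: cvg_snd. Qed.

Lemma continuous_const (T U : topologicalType) (c : U) :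
  continuous (fun _ : T => c).
Proof. by move=> x; exact: cvg_cst. Qed.

Lemma continuous_scale (T : topologicalType) (c : R) (f : T -> R) :
  continuous f -> continuous (fun p => c * f p).
Proof. by move=> cf p; apply: cvgM; [exact: cvg_cst | exact: cf]. Qed.
Arguments continuous_scale {T} c%_ring_scope {f}.

Lemma continuous_sub (T : topologicalType) (f g : T -> R) :
  continuous f -> continuous g -> continuous (fun p => f p - g p).
Proof. move=> cf cg p; exact: (@cvgB _ R^o T (nbhs p) _ _ _ _ _ (cf p) (cg p)). Qed.

Lemma nbhs_lt (T : topologicalType) (f g : T -> R) (p : T) :
  continuous f -> continuous g -> f p < g p -> nbhs p [set q | f q < g q].
Proof.
move=> cf cg fg; have cgf := continuous_sub cg cf.
have pos : nbhs (g p - f p) [set y : R | 0 < y].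
  by apply: open_nbhs_nbhs; split; [exact: open_gt | rewrite /= subr_gt0].
have near_pos : nbhs p [set q | 0 < g q - f q] := cgf p _ pos.
by apply: filterS near_pos => q /=; rewrite subr_gt0.
Qed.

Lemma continuous_if_at (T U : topologicalType) (P : T -> bool) (g1 g2 : T -> U)
    (p : T) :
  {for p, continuous g1} -> {for p, continuous g2} ->
  g1 p = g2 p \/ nbhs p [set q | P q = P p] ->
  {for p, continuous (fun q => if P q then g1 q else g2 q)}.
Proof.
move=> c1 c2 [g12|Ploc] V /= hV.
  have n1 : nbhs p (g1 @^-1` V) by apply: c1; case: (P p) hV; rewrite ?g12.
  have n2 : nbhs p (g2 @^-1` V) by apply: c2; case: (P p) hV; rewrite -?g12.
  by apply: filterS (filterI n1 n2) => q [] /=; case: (P q).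
case Pp: (P p) hV => hV.
  have n1 : nbhs p (g1 @^-1` V) by apply: c1.
  by apply: filterS (filterI n1 Ploc) => q [] /= ? ->; rewrite Pp.
have n2 : nbhs p (g2 @^-1` V) by apply: c2.
by apply: filterS (filterI n2 Ploc) => q [] /= ? ->; rewrite Pp.
Qed.

Lemma unitI_ge0 (t : unitI) : 0 <= set_val t.
Proof. by have := set_valP t; rewrite /= in_itv /= => /andP[]. Qed.

Lemma unitI_le1 (t : unitI) : set_val t <= 1.
Proof. by have := set_valP t; rewrite /= in_itv /= => /andP[]. Qed.

Lemma unitI_eq0 (t : unitI) : ~~ (0 < set_val t) -> set_val t = 0.
Proof. by rewrite -leNgt => t0; apply/eqP; rewrite eq_le t0 unitI_ge0. Qed.

Lemma clamp_mem (r : R) :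
  Num.min 1 (Num.max 0 r) \in (`[0%R, 1%R]%classic : set R).
Proof.
apply: mem_set; rewrite /= in_itv /= ge_min lexx andbT.
by rewrite le_min ler01 le_max lexx.
Qed.

Definition clampI (r : R) : unitI := SigSub (clamp_mem r).
Arguments clampI r%_ring_scope.

Lemma clampI_val (r : R) : set_val (clampI r) = Num.min 1 (Num.max 0 r).
Proof. by []. Qed.

Lemma continuous_clampI : continuous clampI.
Proof.
apply: continuous_into_subspace => x /=.
apply: continuous_min; first exact: cvg_cst.
by apply: continuous_max; [exact: cvg_cst | exact: cvg_id].
Qed.

Lemma clampI_id (t : unitI) (r : R) : r = set_val t -> clampI r = t.
Proof.
move=> ->; apply: val_inj; rewrite -set_valE clampI_val.
by rewrite max_r ?unitI_ge0 // min_r // unitI_le1.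
Qed.

Lemma clampI_le0 (r : R) : r <= 0 -> set_val (clampI r) = 0.
Proof. by move=> r0; rewrite clampI_val max_l // min_r // ler01. Qed.

Lemma clampI_gt0 (r : R) : 0 < set_val (clampI r) -> 0 < r.
Proof. by rewrite clampI_val lt_min ltr01 lt_max ltxx. Qed.

Definition time (T : Type) (p : T * unitI) : R := set_val p.2.

Lemma continuous_time (T : topologicalType) : continuous (@time T).
Proof. exact: continuous_compose (@continuous_snd _ _) (@continuous_set_val _ _). Qed.

Lemma closed_embedding_set_val (T : topologicalType) (A : set T) :
  closed A -> closed_embedding (@set_val T A).
Proof.
move=> A_closed; split.
- by move=> a b /val_inj.
- by move=> U; split=> [[V oV VU]|[V [oV VU]]]; exists V.
- have -> : range (@set_val T A) = A.
    apply/seteqP; split=> [_ [a _ <-]|x Ax]; first exact: set_valP.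
    by exists (SigSub (mem_set Ax)).
  exact: A_closed.
Qed.

(* Fibrewise version of Strom's criterion. *)
Section DeformationCriterion.
Variables (B X : topologicalType) (pX : X -> B) (A : set X) (r : X -> A).
Hypotheses (r_cont : continuous r) (r_retract : forall x, A x -> set_val (r x) = x).
Hypothesis A_closed : closed A.
Variables (K : X * unitI -> X) (sigma : X * unitI -> unitI).
Hypotheses (K_cont : continuous K) (K_fibre : forall p, pX (K p) = pX p.1).
Hypothesis K_start : forall x t, set_val t = 0 -> K (x, t) = x.
Hypothesis K_rel : forall x t, A x -> K (x, t) = x.
Hypothesis sigma_cont : continuous sigma.
Hypothesis sigma_start : forall x t, set_val t = 0 -> set_val (sigma (x, t)) = 0.
Hypothesis sigma_rel : forall x t, A x -> sigma (x, t) = t.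
Hypothesis sigma_pos : forall p, 0 < set_val (sigma p) -> A (K p).

Lemma retraction_set_val (a : A) : r (set_val a) = a.
Proof. by apply: val_inj; apply: r_retract; exact: set_valP. Qed.

Lemma fibrewise_cofibration_of_deformation :
  fibrewise_cofibration (pX \o set_val) pX (@set_val X A).
Proof.
split; first by split=> //; exact: continuous_set_val.
move=> E pE _ f h [f_cont f_fibre] [h_cont h_fibre] h_start.
pose P p := 0 < set_val (sigma p).
exists (fun p => if P p then h (r (K p), sigma p) else f (K p)); split.
- split=> [p|x t]; last first.
    case: ifP => [/sigma_pos AK|_]; last by rewrite f_fibre K_fibre.
    by rewrite h_fibre /= r_retract // K_fibre.
  have hK_cont : continuous (fun q => h (r (K q), sigma q)).
    apply: continuous_compose h_cont; apply: continuous_pair => //.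
    exact: continuous_compose r_cont.
  apply: continuous_if_at; first exact: hK_cont.
    exact: (continuous_compose K_cont f_cont).
  have [Pp|nPp] := boolP (P p).
    right; have sigma_val_cont :=
      continuous_compose sigma_cont (@continuous_set_val _ _).
    have near_P : nbhs p [set q | 0 < set_val (sigma q)].
      exact: (nbhs_lt (continuous_const (c := 0 : R)) sigma_val_cont Pp).
    by apply: filterS near_P => q Pq; exact: Pq.
  have [AK|nAK] := pselect (A (K p)).
    by left; rewrite h_start ?r_retract //; exact: unitI_eq0.
  right; have nbhs_nA : nbhs (K p) (~` A).
    by apply: open_nbhs_nbhs; split=> //; exact: closed_openC.
  have near_nA : nbhs p (K @^-1` (~` A)) by apply: K_cont.
  apply: filterS near_nA => q /= nAKq.
  by apply/negbTE/negP => /sigma_pos.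
- by move=> x t t0; rewrite /P sigma_start // ltxx K_start.
- move=> a t; have Aa : A (set_val a) := set_valP a.
  rewrite /P K_rel // sigma_rel //.
  rewrite retraction_set_val; case: ifP => // t_pos.
  by rewrite h_start //; apply: unitI_eq0; rewrite t_pos.
Qed.

End DeformationCriterion.

Lemma range_idempotent (T : Type) (e : T -> T) :
  (forall x, e (e x) = e x) -> range e = [set x | e x = x].
Proof.
move=> ee; apply/seteqP; split=> [_ [x _ <-]|x ex]; [exact: ee | by exists x].
Qed.

Lemma image_retraction_mem (T : Type) (e : T -> T) (x : T) : e x \in range e.
Proof. by apply: mem_set; exists x. Qed.

Definition image_retraction (T : Type) (e : T -> T) (x : T) : range e :=
  SigSub (image_retraction_mem e x).

Lemma continuous_image_retraction (T : topologicalType) (e : T -> T) :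
  continuous e -> continuous (image_retraction e).
Proof. by move=> e_cont; apply: continuous_into_subspace; exact: e_cont. Qed.

Section FibreProduct.
Variables (B X : topologicalType) (pX : X -> B).

Lemma graph_mem (g : X -> X) (pg : forall x, pX (g x) = pX x) (x : X) :
  (x, g x) \in fibprod_set pX.
Proof. by apply: mem_set; rewrite /fibprod_set /= pg. Qed.

Definition graph_map (g : X -> X) (pg : forall x, pX (g x) = pX x) (x : X) :
  fibprod pX := SigSub (graph_mem pg x).

Lemma continuous_graph_map (g : X -> X) (pg : forall x, pX (g x) = pX x) :
  continuous g -> continuous (graph_map pg).
Proof.
move=> g_cont; apply: continuous_into_subspace.
change (continuous (fun x => (x, g x))).
by apply: continuous_pair => // x; exact: cvg_id.
Qed.

Lemma graph_map_fixed (g : X -> X) (pg : forall x, pX (g x) = pX x) (y : X) :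
  g y = y -> graph_map pg y = Defs.diagonal pX y.
Proof. by move=> gy; apply: val_inj; rewrite /= gy. Qed.

(* If the diagonal of X x_B X is closed, so is the fixed-point set of any
   fibrewise self-map: it is the preimage of the diagonal under the graph. *)
Lemma closed_fixed_points (g : X -> X) :
  fibrewise_map pX pX g -> closed (range (Defs.diagonal pX)) ->
  closed [set x | g x = x].
Proof.
move=> [g_cont pg] diag_closed.
have -> : [set x | g x = x] = graph_map pg @^-1` range (Defs.diagonal pX).
  apply/seteqP; split=> [x gx|x [y _ /(congr1 val) [yx yg]]].
    by exists x => //; rewrite graph_map_fixed.
  by rewrite /= -yg yx.
have graph_cont : continuous (graph_map pg) := continuous_graph_map g_cont.
exact: (proj1 (continuous_closedP _) graph_cont _ diag_closed).
Qed.

End FibreProduct.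

Section ConnectingHomotopy.
Variables (B X : topologicalType) (pX : X -> B).

(* The fibrewise space M of pairs lying in a common fibre, carrying a real
   label that may be nonzero only on the diagonal; it is fibred over B via
   the first point.  Extending homotopies into M is how the cofibration
   property of the diagonal gets used. *)
Definition labelled_pairs : set (X * X * R) :=
  [set q | pX q.1.1 = pX q.1.2 /\ (q.2 = 0 \/ q.1.1 = q.1.2)].

Definition labelled_proj (q : labelled_pairs) : B := pX (set_val q).1.1.

Lemma unlabelled_mem (z : fibprod pX) :
  ((set_val z).1, (set_val z).2, 0) \in labelled_pairs.
Proof. by apply: mem_set; split; [exact: (set_valP z) | left]. Qed.

Definition unlabelled (z : fibprod pX) : labelled_pairs :=
  SigSub (unlabelled_mem z).

Lemma diagonal_labelled_mem (p : X * unitI) :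
  (p.1, p.1, set_val p.2) \in labelled_pairs.
Proof. by apply: mem_set; split=> //; right. Qed.

Definition diagonal_labelled (p : X * unitI) : labelled_pairs :=
  SigSub (diagonal_labelled_mem p).

Lemma forget_label_mem (q : labelled_pairs) :
  ((set_val q).1.1, (set_val q).1.2) \in fibprod_set pX.
Proof. by apply: mem_set; have [] := set_valP q. Qed.

Definition forget_label (q : labelled_pairs) : fibprod pX :=
  SigSub (forget_label_mem q).

Lemma continuous_labelled_proj : continuous pX -> continuous labelled_proj.
Proof.
move=> pX_cont; apply: continuous_compose pX_cont.
apply: continuous_compose (@continuous_fst _ _).
exact: continuous_compose (@continuous_set_val _ _) (@continuous_fst _ _).
Qed.

Lemma continuous_unlabelled : continuous unlabelled.
Proof.
apply: continuous_into_subspace.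
change (continuous (fun z : fibprod pX => ((set_val z).1, (set_val z).2, 0 : R))).
apply: continuous_pair; last exact: continuous_const.
by apply: continuous_pair; apply: continuous_compose (@continuous_set_val _ _) _;
  [exact: continuous_fst | exact: continuous_snd].
Qed.

Lemma continuous_diagonal_labelled : continuous diagonal_labelled.
Proof.
apply: continuous_into_subspace.
change (continuous (fun p : X * unitI => (p.1, p.1, set_val p.2))).
by apply: continuous_pair; [apply: continuous_pair; exact: continuous_fst
  | exact: continuous_time].
Qed.

Lemma continuous_forget_label : continuous forget_label.
Proof.
apply: continuous_into_subspace.
change (continuous (fun q : labelled_pairs => ((set_val q).1.1, (set_val q).1.2))).
have fst_cont := continuous_compose (@continuous_set_val _ labelled_pairs)
  (@continuous_fst _ _).
by apply: continuous_pair; apply: continuous_compose fst_cont _;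
  [exact: continuous_fst | exact: continuous_snd].
Qed.

Record connecting_homotopy (g : X -> X) (u v : X * unitI -> X)
    (a : X * unitI -> R) : Prop := {
  ch_cont_u : continuous u;
  ch_cont_v : continuous v;
  ch_cont_a : continuous a;
  ch_fibre_u : forall p, pX (u p) = pX p.1;
  ch_fibre_v : forall p, pX (v p) = pX p.1;
  ch_start : forall x t, set_val t = 0 ->
    [/\ u (x, t) = x, v (x, t) = g x & a (x, t) = 0];
  ch_fixed : forall y t, g y = y ->
    [/\ u (y, t) = y, v (y, t) = y & a (y, t) = set_val t];
  ch_label : forall p, a p = 0 \/ u p = v p;
  ch_apart_open : open [set p | u p <> v p] }.

(* Extending unlabelled (at time 0) and diagonal_labelled (on the diagonal)
   to a homotopy X x_B X x I -> M and restricting along the graph of g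
   gives a connecting homotopy. *)
Lemma connecting_homotopy_of_LEC (g : X -> X) :
  continuous pX -> fibrewise_LEC pX -> fibrewise_map pX pX g ->
  exists u v a, connecting_homotopy g u v a.
Proof.
move=> pX_cont [[_ diag_HEP] [_ _ diag_closed]] [g_cont pg].
have start_compat (x : X) (t : unitI) : set_val t = 0 ->
    diagonal_labelled (x, t) = unlabelled (Defs.diagonal pX x).
  by move=> t0; apply: val_inj; rewrite /= t0.
have [Ext [[Ext_cont Ext_fibre] Ext_start Ext_diag]] := diag_HEP _ labelled_proj
  (continuous_labelled_proj pX_cont) unlabelled diagonal_labelled
  (conj continuous_unlabelled (fun=> erefl))
  (conj continuous_diagonal_labelled (fun _ _ => erefl)) start_compat.
pose Q (p : X * unitI) := Ext (graph_map pg p.1, p.2).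
have Q_cont : continuous Q.
  apply: continuous_compose Ext_cont.
  apply: continuous_pair; last exact: continuous_snd.
  exact: continuous_compose (@continuous_fst _ _) (continuous_graph_map g_cont).
have Q_val_cont := continuous_compose Q_cont (@continuous_set_val _ _).
have Q_start x t : set_val t = 0 -> set_val (Q (x, t)) = (x, g x, 0).
  by move=> t0; rewrite /Q Ext_start.
have Q_fixed y t : g y = y -> set_val (Q (y, t)) = (y, y, set_val t).
  by move=> gy; rewrite /Q graph_map_fixed // Ext_diag.
exists (fun p => (set_val (Q p)).1.1), (fun p => (set_val (Q p)).1.2),
  (fun p => (set_val (Q p)).2); split.
- exact: continuous_compose Q_val_cont
    (continuous_compose (@continuous_fst _ _) (@continuous_fst _ _)).
- exact: continuous_compose Q_val_cont
    (continuous_compose (@continuous_fst _ _) (@continuous_snd _ _)).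
- exact: continuous_compose Q_val_cont (@continuous_snd _ _).
- by move=> [x t]; exact: Ext_fibre.
- by move=> [x t]; have [<- _] := set_valP (Q (x, t)); exact: Ext_fibre.
- by move=> x t t0; rewrite Q_start.
- by move=> y t gy; rewrite Q_fixed.
- by move=> p; have [_ ] := set_valP (Q p).
- have -> : [set p | (set_val (Q p)).1.1 <> (set_val (Q p)).1.2] =
      (fun p => forget_label (Q p)) @^-1` ~` range (Defs.diagonal pX).
    apply/seteqP; split=> p /= apart.
      by move=> [x _ /(congr1 val) [xu xv]]; apply: apart; rewrite -xu -xv.
    by move=> uv; apply: apart; exists (set_val (Q p)).1.1 => //; apply: val_inj;
      rewrite /= -uv.
  have fQ_cont := continuous_compose Q_cont continuous_forget_label.
  exact: (proj1 (continuousP _) fQ_cont _ (closed_openC diag_closed)).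
Qed.

End ConnectingHomotopy.

Lemma continuous_reparametrise (T Y : topologicalType) (w : T * unitI -> Y)
    (s : T * unitI -> R) :
  continuous w -> continuous s ->
  continuous (fun p => w (p.1, clampI (Num.min (time p) (s p)))).
Proof.
move=> w_cont s_cont; apply: continuous_compose w_cont.
apply: continuous_pair; first exact: continuous_fst.
apply: continuous_compose continuous_clampI => p.
by apply: continuous_min; [exact: continuous_time | exact: s_cont].
Qed.

Section DeformationFromConnectingHomotopy.
Variables (B X : topologicalType) (pX : X -> B) (g : X -> X).
Variables (u v : X * unitI -> X) (a : X * unitI -> R).
Hypothesis ch : connecting_homotopy pX g u v a.

(* K(x,t) follows u(x,-) forwards and then v(x,-) backwards, the position
   being read off the label: while 2a <= t it sits at u(x, 6a - 2t), once
   2a > t at v(x, 4t - 6a) (times clamped into [0, t]).  The switch happens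
   where 2a = t, so a <> 0 and the two paths meet; once 3a >= 2t it has
   reached v(x,0) = g x. *)
Definition forward_path (p : X * unitI) : X :=
  u (p.1, clampI (Num.min (time p) (6 * a p - 2 * time p))).

Definition backward_path (p : X * unitI) : X :=
  v (p.1, clampI (Num.min (time p) (4 * time p - 6 * a p))).

Definition deformation (p : X * unitI) : X :=
  if 2 * a p <= time p then forward_path p else backward_path p.

(* The control function: positive only once K has reached g x. *)
Definition control (p : X * unitI) : unitI := clampI (3 * a p - 2 * time p).

Lemma u_at_start (x : X) (s : unitI) : set_val s = 0 -> u (x, s) = x.
Proof. by move=> s0; have [] := ch_start ch x s0. Qed.

Lemma v_at_start (x : X) (s : unitI) : set_val s = 0 -> v (x, s) = g x.
Proof. by move=> s0; have [] := ch_start ch x s0. Qed.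

(* Near a time-0 point that g moves, u and v are apart, so the label is 0. *)
Lemma label_zero_near_start (x : X) (t : unitI) :
  set_val t = 0 -> g x <> x -> nbhs (x, t) [set p | a p = 0].
Proof.
move=> t0 gx; have [u0 v0 _] := ch_start ch x t0.
have apart : nbhs (x, t) [set p | u p <> v p].
  apply: open_nbhs_nbhs; split; first exact: ch_apart_open ch.
  by rewrite /= u0 v0 => xg; apply: gx.
by apply: filterS apart => p /= uv; have [|//] := ch_label ch p.
Qed.

Lemma deformation_start (x : X) (t : unitI) :
  set_val t = 0 -> deformation (x, t) = x.
Proof.
move=> t0; have [_ _ a0] := ch_start ch x t0.
rewrite /deformation /forward_path /time /= a0 t0 mulr0 lexx u_at_start //.
by apply: clampI_le0; rewrite ge_min lexx.
Qed.

Lemma deformation_fixed (y : X) (t : unitI) : g y = y -> deformation (y, t) = y.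
Proof.
move=> gy; have fixed s : u (y, s) = y /\ v (y, s) = y.
  by have [] := ch_fixed ch s gy.
by rewrite /deformation /forward_path /backward_path; case: ifP => _;
  rewrite ?(fixed _).1 ?(fixed _).2.
Qed.

Lemma deformation_fibre (p : X * unitI) : pX (deformation p) = pX p.1.
Proof.
by rewrite /deformation /forward_path /backward_path; case: ifP => _;
  rewrite ?(ch_fibre_u ch) ?(ch_fibre_v ch).
Qed.

Lemma control_start (x : X) (t : unitI) :
  set_val t = 0 -> set_val (control (x, t)) = 0.
Proof.
move=> t0; have [_ _ a0] := ch_start ch x t0.
by apply: clampI_le0; rewrite /time /= a0 t0; lra.
Qed.

Lemma control_fixed (y : X) (t : unitI) : g y = y -> control (y, t) = t.
Proof.
move=> gy; have [_ _ at_] := ch_fixed ch t gy.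
by apply: clampI_id; rewrite at_ /time /=; lra.
Qed.

Lemma control_pos (p : X * unitI) :
  0 < set_val (control p) -> deformation p = g p.1.
Proof.
case: p => x t /clampI_gt0; rewrite /deformation /backward_path /time /= => pos.
have t_ge0 := unitI_ge0 t.
rewrite ifF; last by apply/negbTE; rewrite -ltNge; lra.
by rewrite v_at_start //; apply: clampI_le0; rewrite ge_min; apply/orP; right; lra.
Qed.

Lemma continuous_control : continuous control.
Proof.
apply: continuous_compose continuous_clampI.
apply: continuous_sub; apply: continuous_scale;
  [exact: ch_cont_a ch | exact: continuous_time].
Qed.

Lemma deformation_switch (x : X) (t : unitI) :
  2 * a (x, t) = time (x, t) ->
  forward_path (x, t) = backward_path (x, t) \/
  nbhs (x, t) [set p | 2 * a p <= time p].
Proof.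
move=> switch; have [t0|t_pos] := eqVneq (time (x, t)) 0.
  have [_ _ a0] := ch_start ch x t0.
  have [gx|gx] := pselect (g x = x).
    left; rewrite /forward_path /backward_path u_at_start ?v_at_start //;
      by apply: clampI_le0; rewrite t0 a0 ge_min lexx.
  right; apply: filterS (label_zero_near_start t0 gx) => p /= ap.
  by rewrite ap mulr0; exact: unitI_ge0.
left; have a_nz : a (x, t) != 0.
  by apply: contra t_pos => /eqP a0; rewrite -switch a0 mulr0.
have [a0|uv] := ch_label ch (x, t); first by rewrite a0 eqxx in a_nz.
rewrite /forward_path /backward_path.
have -> : clampI (Num.min (time (x, t)) (6 * a (x, t) - 2 * time (x, t))) = t.
  by apply: clampI_id; rewrite /time /= in switch *; rewrite min_l //; lra.
have -> : clampI (Num.min (time (x, t)) (4 * time (x, t) - 6 * a (x, t))) = t.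
  by apply: clampI_id; rewrite /time /= in switch *; rewrite min_l //; lra.
exact: uv.
Qed.

Lemma continuous_deformation : continuous deformation.
Proof.
have two_a_cont := continuous_scale 2 (ch_cont_a ch).
have tau_cont := @continuous_time X.
have forward_cont := continuous_sub (continuous_scale 6 (ch_cont_a ch))
  (continuous_scale 2 tau_cont).
have backward_cont := continuous_sub (continuous_scale 4 tau_cont)
  (continuous_scale 6 (ch_cont_a ch)).
move=> [x t]; apply: (continuous_if_at (g1 := forward_path) (g2 := backward_path)).
- exact: (continuous_reparametrise (ch_cont_u ch) forward_cont).
- exact: (continuous_reparametrise (ch_cont_v ch) backward_cont).
have [lt|gt|eq] := ltgtP (2 * a (x, t)) (time (x, t)).
- right; apply: filterS (nbhs_lt two_a_cont tau_cont lt) => p /= lt_p.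
  exact: ltW.
- right; apply: filterS (nbhs_lt tau_cont two_a_cont gt) => p /= gt_p.
  by rewrite leNgt gt_p.
- have [agree|near_forward] := deformation_switch eq; first by left.
  by right; apply: filterS near_forward.
Qed.

End DeformationFromConnectingHomotopy.

Unset Implicit Arguments.

Theorem corollary4p7 (B X : topologicalType) (pX : X -> B) :
  continuous pX -> fibrewise_LEC pX ->
  forall e : X -> X, fibrewise_map pX pX e -> (forall x, e (e x) = e x) ->
  closed_fibrewise_cofibred_pair pX (range e).
Proof.
move=> pX_cont LEC e e_fib ee.
have fixed_image : range e = [set x | e x = x] := range_idempotent ee.
have image_closed : closed (range e).
  have [_ [_ _ diag_closed]] := LEC.
  by rewrite fixed_image; exact: closed_fixed_points e_fib diag_closed.
have [u [v [a ch]]] := connecting_homotopy_of_LEC pX_cont LEC e_fib.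
split; last exact: closed_embedding_set_val.
have [e_cont _] := e_fib.
apply: (@fibrewise_cofibration_of_deformation _ _ _ _ (image_retraction e) _ _ _
  (deformation u v a) (control a)).
- exact: continuous_image_retraction.
- by move=> _ [y _ <-]; exact: ee.
- exact: image_closed.
- exact: continuous_deformation ch.
- exact: deformation_fibre ch.
- exact: deformation_start ch.
- by move=> _ t [y _ <-]; exact: (deformation_fixed ch t (ee y)).
- exact: continuous_control ch.
- exact: control_start ch.
- by move=> _ t [y _ <-]; exact: (control_fixed ch t (ee y)).
- by move=> p /(control_pos ch) ->; exists p.1.
Qed.
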